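(* Let $X$ be a topological space in which every open set is a union of countably many clopen sets. Then $X$ is a QN space if, and only if, for every Borel function $\Psi:X\to\mathbb{N}^{\mathbb{N}}$, $\Psi[X]$ is bounded.
   Context: For a metric space $Y$, $f:X\to Y$ is a quasi-normal limit of $f_n:X\to Y$ if there are positive reals $\epsilon_n\to0$ such that for each $x\in X$, $d(f_n(x),f(x))<\epsilon_n$ for all but finitely many $n$. $X$ is a QN space if whenever a sequence of continuous real-valued functions on $X$ converges pointwise to $0$, it converges to $0$ quasi-normally. $\Psi:X\to\mathbb{N}^{\mathbb{N}}$ is Borel if preimages of open sets are Borel. $Y\subseteq\mathbb{N}^{\mathbb{N}}$ is bounded if there is $g\in\mathbb{N}^{\mathbb{N}}$ such that each $f\in Y$ satisfies $f(n)\le g(n)$ for all but finitely many $n$. *)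

From Stdlib Require Import Reals Rtopology Arith.
Open Scope R_scope.

Record Topology (X : Type) : Type := {
  open : (X -> Prop) -> Prop;
  open_full : open (fun _ => True);
  open_union : forall F : (X -> Prop) -> Prop,
      (forall U, F U -> open U) -> open (fun x => exists U, F U /\ U x);
  open_inter : forall U V, open U -> open V -> open (fun x => U x /\ V x)
}.
Arguments open {X} _ _.

Definition closed {X : Type} (T : Topology X) (A : X -> Prop) : Prop :=
  open T (fun x => ~ A x).

Definition clopen {X : Type} (T : Topology X) (A : X -> Prop) : Prop :=
  open T A /\ closed T A.

Definition open_countable_union_of_clopen {X : Type} (T : Topology X) : Prop :=
  forall U, open T U ->
    exists C : nat -> (X -> Prop),
      (forall n, clopen T (C n)) /\ (forall x, U x <-> exists n, C n x).

Definition continuous_real {X : Type} (T : Topology X) (f : X -> R) : Prop :=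
  forall V : R -> Prop, open_set V -> open T (fun x => V (f x)).

Definition qn_converges {X : Type} (fn : nat -> X -> R) (f : X -> R) : Prop :=
  exists eps : nat -> R,
    (forall n, 0 < eps n) /\ Un_cv eps 0 /\
    (forall x, exists N, forall n, (N <= n)%nat -> Rabs (fn n x - f x) < eps n).

Definition QN_space {X : Type} (T : Topology X) : Prop :=
  forall fn : nat -> X -> R,
    (forall n, continuous_real T (fn n)) ->
    (forall x, Un_cv (fun n => fn n x) 0) ->
    qn_converges fn (fun _ => 0).

Definition sigma_algebra {X : Type} (S : (X -> Prop) -> Prop) : Prop :=
  (forall A, S A -> S (fun x => ~ A x)) /\
  (forall A : nat -> (X -> Prop), (forall n, S (A n)) ->
      S (fun x => exists n, A n x)).

Definition Borel {X : Type} (T : Topology X) (A : X -> Prop) : Prop :=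
  forall S : (X -> Prop) -> Prop,
    sigma_algebra S -> (forall U, open T U -> S U) -> S A.

(* Baire space N^N with the product topology (N discrete). *)
Definition baire_open (U : (nat -> nat) -> Prop) : Prop :=
  forall f, U f -> exists n, forall g, (forall k, (k < n)%nat -> g k = f k) -> U g.

Definition Borel_function {X : Type} (T : Topology X) (Psi : X -> (nat -> nat)) : Prop :=
  forall U, baire_open U -> Borel T (fun x => U (Psi x)).

Definition bounded_baire (Y : (nat -> nat) -> Prop) : Prop :=
  exists g : nat -> nat, forall f, Y f -> exists N, forall n, (N <= n)%nat -> (f n <= g n)%nat.

Definition image_of {X : Type} (Psi : X -> (nat -> nat)) : (nat -> nat) -> Prop :=
  fun f => exists x, Psi x = f.

From Stdlib Require Import Reals Rtopology Arith Lia Lra Classical ClassicalEpsilon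
  FunctionalExtensionality PropExtensionality.
Open Scope R_scope.

(* If every open set is a countable union of clopen sets, every open set is a
   pointwise limit of locally constant functions. QN is exactly what makes such limits
   closed under countable unions: for countably many convergent sequences of locally
   constant functions it provides one modulus [t] such that, at each point, all but
   finitely many of the sequences are already at their limit from time [t i] on. Hence
   every Borel set, and every coordinate of a Borel [Psi : X -> N^N], is such a limit,
   and applying the modulus to the coordinates bounds [Psi x k] by [t k] for almost all
   [k]. Conversely, for continuous [f_n -> 0] the map sending [x] to the sequence of
   times after which [|f_n x| < 1/(k+1)] is Borel; a bound [g] on its image, turned
   into an index [s n -> oo] with [g (s n) <= n], gives the quasi-normal rates
   [1/(s n + 1)]. *)

Lemma set_ext {X : Type} (A B : X -> Prop) : (forall x, A x <-> B x) -> A = B.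
Proof.
  intros H; apply functional_extensionality; intros x.
  apply propositional_extensionality; auto.
Qed.

Definition eventually (P : nat -> Prop) : Prop :=
  exists N, forall n, (N <= n)%nat -> P n.

Lemma eventually_ge m : eventually (fun n => (m <= n)%nat).
Proof. exists m; auto. Qed.

Lemma eventually_mono (P Q : nat -> Prop) :
  (forall n, P n -> Q n) -> eventually P -> eventually Q.
Proof. intros HPQ [N HN]; exists N; auto. Qed.

Lemma eventually_and (P Q : nat -> Prop) :
  eventually P -> eventually Q -> eventually (fun n => P n /\ Q n).
Proof.
  intros [N HN] [M HM]; exists (max N M); intros n Hn; split.
  - apply HN; lia.
  - apply HM; lia.
Qed.

Lemma eventually_forall_lt (P : nat -> nat -> Prop) K :
  (forall i, (i < K)%nat -> eventually (P i)) ->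
  eventually (fun n => forall i, (i < K)%nat -> P i n).
Proof.
  induction K as [|K IH]; intros HP.
  - exists O; intros n _ i Hi; lia.
  - destruct (eventually_and _ _ (IH ltac:(auto)) (HP K ltac:(lia))) as [N HN].
    exists N; intros n Hn i Hi; destruct (HN n Hn) as [Hlt HK].
    destruct (Nat.eq_dec i K) as [->|]; auto; apply Hlt; lia.
Qed.

Lemma stable_eventually {Y : Type} (f : nat -> Y) a v :
  (forall n, (a <= n)%nat -> f (S n) = f n) -> eventually (fun n => f n = v) ->
  forall n, (a <= n)%nat -> f n = v.
Proof.
  intros Hstable [N HN] n Hn.
  assert (Hshift : forall m, f (n + m)%nat = f n).
  { induction m as [|m IH]; [now rewrite Nat.add_0_r|].
    rewrite Nat.add_succ_r, Hstable by lia; exact IH. }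
  rewrite <- (Hshift N); apply HN; lia.
Qed.

Lemma inv_INR_S_pos k : 0 < / INR (S k).
Proof. apply Rinv_0_lt_compat, lt_0_INR; lia. Qed.

Lemma inv_INR_S_le i K : (K <= i)%nat -> / INR (S i) <= / INR (S K).
Proof. intros; apply Rinv_le_contravar; [apply lt_0_INR; lia | apply le_INR; lia]. Qed.

Lemma inv_INR_S_small e : 0 < e -> exists K, / INR (S K) < e.
Proof.
  intros He; destruct (INR_archimed e 1 He) as [K HK]; exists K.
  assert (HS : INR K <= INR (S K)) by (apply le_INR; lia).
  assert (H0 : 0 < INR (S K)) by (apply lt_0_INR; lia).
  apply (Rmult_lt_reg_l (INR (S K))); auto.
  rewrite Rinv_r by lra; nra.
Qed.

Lemma open_abs_lt c : 0 < c -> open_set (fun y => Rabs y < c).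
Proof.
  intros Hc; replace (fun y => Rabs y < c) with (disc 0 (mkposreal c Hc)).
  - apply disc_P1.
  - apply set_ext; intros y; unfold disc; simpl; now rewrite Rminus_0_r.
Qed.

Definition bool_of (P : Prop) : bool :=
  if excluded_middle_informative P then true else false.

Lemma bool_of_true (P : Prop) : P -> bool_of P = true.
Proof. unfold bool_of; destruct (excluded_middle_informative P); tauto. Qed.

Lemma bool_of_false (P : Prop) : ~ P -> bool_of P = false.
Proof. unfold bool_of; destruct (excluded_middle_informative P); tauto. Qed.

(* The least [i < n] with [p i], or [n] if there is none. *)
Fixpoint first_true (p : nat -> bool) (n : nat) : nat :=
  match n with
  | O => O
  | S n => if p O then O else S (first_true (fun i => p (S i)) n)
  end.

Lemma first_true_le_witness p n i :
  p i = true -> (i < n)%nat -> (first_true p n <= i)%nat.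
Proof.
  revert p i; induction n as [|n IH]; intros p i Hi Hin; simpl; [lia|].
  destruct (p O) eqn:H0; [lia|].
  destruct i as [|i]; [congruence|].
  specialize (IH (fun j => p (S j)) i Hi); lia.
Qed.

Lemma first_true_ge p n K :
  (forall i, (i < K)%nat -> p i = false) -> (K <= n)%nat -> (K <= first_true p n)%nat.
Proof.
  revert p K; induction n as [|n IH]; intros p K HK HKn; simpl; [lia|].
  destruct K as [|K]; [lia|].
  rewrite HK by lia.
  specialize (IH (fun i => p (S i)) K (fun i Hi => HK (S i) ltac:(lia))); lia.
Qed.

Section LocallyConstant.
Context {X : Type} (T : Topology X).

Definition locally_constant {Y : Type} (f : X -> Y) : Prop :=
  forall x, exists U, open T U /\ U x /\ forall y, U y -> f y = f x.

Lemma lc_const {Y : Type} (c : Y) : locally_constant (fun _ => c).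
Proof. intros x; exists (fun _ => True); split; [apply open_full | auto]. Qed.

Lemma lc_comp {Y Z : Type} (f : X -> Y) (h : Y -> Z) :
  locally_constant f -> locally_constant (fun x => h (f x)).
Proof.
  intros Hf x; destruct (Hf x) as [U [HU [Ux Hc]]].
  exists U; repeat split; auto; intros y Uy; now rewrite Hc.
Qed.

Lemma lc_op2 {Y1 Y2 Z : Type} (f : X -> Y1) (g : X -> Y2) (h : Y1 -> Y2 -> Z) :
  locally_constant f -> locally_constant g -> locally_constant (fun x => h (f x) (g x)).
Proof.
  intros Hf Hg x.
  destruct (Hf x) as [U [HU [Ux Hcf]]], (Hg x) as [V [HV [Vx Hcg]]].
  exists (fun y => U y /\ V y); split; [now apply open_inter|].
  split; [auto|]; intros y [Uy Vy]; now rewrite Hcf, Hcg.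
Qed.

Lemma lc_clopen (C : X -> Prop) : clopen T C -> locally_constant C.
Proof.
  intros [HC HnC] x; destruct (classic (C x)) as [Cx|nCx].
  - exists C; repeat split; auto; intros y Cy.
    now apply propositional_extensionality.
  - exists (fun y => ~ C y); repeat split; auto; intros y nCy.
    apply propositional_extensionality; tauto.
Qed.

Lemma lc_exists_lt (P : nat -> X -> Prop) n :
  (forall i, locally_constant (P i)) ->
  locally_constant (fun x => exists i, (i < n)%nat /\ P i x).
Proof.
  intros HP; induction n as [|n IH].
  - replace (fun x => exists i, (i < 0)%nat /\ P i x) with (fun _ : X => False).
    + apply lc_const.
    + apply set_ext; intros x; split; [tauto|]; intros [i [Hi _]]; lia.
  - replace (fun x => exists i, (i < S n)%nat /\ P i x)
      with (fun x => (exists i, (i < n)%nat /\ P i x) \/ P n x).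
    + exact (lc_op2 _ _ or IH (HP n)).
    + apply set_ext; intros x; split.
      * intros [[i [Hi Pi]]|Pn]; [exists i | exists n]; split; auto; lia.
      * intros [i [Hi Pi]]; destruct (Nat.eq_dec i n) as [->|]; auto.
        left; exists i; split; auto; lia.
Qed.

Lemma lc_first_true (p : X -> nat -> bool) n :
  (forall i, locally_constant (fun x => p x i)) ->
  locally_constant (fun x => first_true (p x) n).
Proof.
  revert p; induction n as [|n IH]; intros p Hp; simpl.
  - apply lc_const.
  - apply (lc_op2 (fun x => p x O) (fun x => first_true (fun i => p x (S i)) n)
             (fun b m => if b then O else S m)); [auto|].
    apply (IH (fun x i => p x (S i))); auto.
Qed.

Lemma lc_continuous (f : X -> R) : locally_constant f -> continuous_real T f.
Proof.
  intros Hf V _.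
  replace (fun x => V (f x))
    with (fun x => exists U, (open T U /\ forall y, U y -> V (f y)) /\ U x).
  - apply (open_union X T (fun U => open T U /\ forall y, U y -> V (f y))); tauto.
  - apply set_ext; intros x; split.
    + intros [U [[_ HU] Ux]]; auto.
    + intros Vx; destruct (Hf x) as [U [HU [Ux Hc]]].
      exists U; repeat split; auto; intros y Uy; now rewrite Hc.
Qed.

Definition lc_limit {Y : Type} (f : X -> Y) : Prop :=
  exists F : nat -> X -> Y,
    (forall n, locally_constant (F n)) /\ forall x, eventually (fun n => F n x = f x).

Lemma lc_limit_comp {Y Z : Type} (f : X -> Y) (h : Y -> Z) :
  lc_limit f -> lc_limit (fun x => h (f x)).
Proof.
  intros [F [HF Hcv]]; exists (fun n x => h (F n x)); split.
  - intros n; now apply lc_comp.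
  - intros x; apply (eventually_mono _ _ (fun n E => f_equal h E) (Hcv x)).
Qed.

End LocallyConstant.

Section BorelSets.
Context {X : Type} (T : Topology X).

Lemma Borel_open (U : X -> Prop) : open T U -> Borel T U.
Proof. intros HU S _ HS; auto. Qed.

Lemma Borel_compl (A : X -> Prop) : Borel T A -> Borel T (fun x => ~ A x).
Proof. intros HA S [Hc Hu] HS; apply Hc, HA; [split|]; auto. Qed.

Lemma Borel_cunion (A : nat -> X -> Prop) :
  (forall n, Borel T (A n)) -> Borel T (fun x => exists n, A n x).
Proof. intros HA S [Hc Hu] HS; apply Hu; intros n; apply HA; [split|]; auto. Qed.

Lemma Borel_const (P : Prop) : Borel T (fun _ => P).
Proof.
  destruct (classic P) as [HP|HnP].
  - replace (fun _ : X => P) with (fun _ : X => True).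
    + apply Borel_open, open_full.
    + apply set_ext; tauto.
  - replace (fun _ : X => P) with (fun _ : X => ~ True).
    + apply Borel_compl, Borel_open, open_full.
    + apply set_ext; tauto.
Qed.

Lemma Borel_cinter (A : nat -> X -> Prop) :
  (forall n, Borel T (A n)) -> Borel T (fun x => forall n, A n x).
Proof.
  intros HA; replace (fun x => forall n, A n x) with (fun x => ~ exists n, ~ A n x).
  - apply Borel_compl, Borel_cunion; intros n; apply Borel_compl, HA.
  - apply set_ext; intros x; split.
    + intros H n; apply NNPP; intros Hn; apply H; eauto.
    + intros H [n Hn]; auto.
Qed.

Lemma Borel_or (A B : X -> Prop) : Borel T A -> Borel T B -> Borel T (fun x => A x \/ B x).
Proof.
  intros HA HB.
  replace (fun x => A x \/ B x)
    with (fun x => exists n : nat, match n with O => A x | _ => B x end).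
  - apply Borel_cunion; intros [|n]; auto.
  - apply set_ext; intros x; split.
    + intros [[|n] H]; auto.
    + intros [H|H]; [exists O | exists 1%nat]; auto.
Qed.

Lemma Borel_and (A B : X -> Prop) : Borel T A -> Borel T B -> Borel T (fun x => A x /\ B x).
Proof.
  intros HA HB; replace (fun x => A x /\ B x) with (fun x => ~ (~ A x \/ ~ B x)).
  - apply Borel_compl, Borel_or; now apply Borel_compl.
  - apply set_ext; intros x; tauto.
Qed.

Lemma Borel_impl (A B : X -> Prop) : Borel T A -> Borel T B -> Borel T (fun x => A x -> B x).
Proof.
  intros HA HB; replace (fun x => A x -> B x) with (fun x => ~ A x \/ B x).
  - apply Borel_or; auto; now apply Borel_compl.
  - apply set_ext; intros x; tauto.
Qed.

Definition update (f : nat -> nat) (k a : nat) : nat -> nat :=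
  fun j => if (j =? k)%nat then a else f j.

Lemma Borel_prefix_property (Psi : X -> nat -> nat) :
  (forall k a, Borel T (fun x => Psi x k = a)) ->
  forall n (Q : (nat -> nat) -> Prop),
    (forall f g, (forall j, (j < n)%nat -> f j = g j) -> Q f -> Q g) ->
    Borel T (fun x => Q (Psi x)).
Proof.
  intros Hlevel n; induction n as [|n IH]; intros Q HQ.
  - replace (fun x => Q (Psi x)) with (fun _ : X => Q (fun _ => O)); [apply Borel_const|].
    apply set_ext; intros x; split; apply HQ; intros; lia.
  - replace (fun x => Q (Psi x))
      with (fun x => exists a, Psi x n = a /\ Q (update (Psi x) n a)).
    + apply Borel_cunion; intros a; apply Borel_and; [apply Hlevel|].
      apply (IH (fun f => Q (update f n a))).
      intros f g Hfg; apply HQ; intros j Hj; unfold update.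
      destruct (Nat.eqb_spec j n); auto; apply Hfg; lia.
    + apply set_ext; intros x; split.
      * intros [a [<- Hq]]; apply (HQ (update (Psi x) n (Psi x n))); auto.
        intros j _; unfold update; destruct (Nat.eqb_spec j n) as [->|]; auto.
      * intros Hq; exists (Psi x n); split; auto.
        apply (HQ (Psi x)); auto; intros j _; unfold update.
        destruct (Nat.eqb_spec j n) as [->|]; auto.
Qed.

Lemma Borel_function_of_levels (Psi : X -> nat -> nat) :
  (forall k a, Borel T (fun x => Psi x k = a)) -> Borel_function T Psi.
Proof.
  intros Hlevel U HU.
  replace (fun x => U (Psi x))
    with (fun x => exists n, forall g, (forall j, (j < n)%nat -> g j = Psi x j) -> U g).
  - apply Borel_cunion; intros n.
    apply (Borel_prefix_property Psi Hlevel n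
             (fun f => forall g, (forall j, (j < n)%nat -> g j = f j) -> U g)).
    intros f f' Hff' Hf g Hg; apply Hf; intros j Hj; rewrite Hg, Hff'; auto.
  - apply set_ext; intros x; split.
    + intros [n Hn]; now apply Hn.
    + intros Hx; destruct (HU _ Hx) as [n Hn]; exists n; auto.
Qed.

End BorelSets.

Section Forward.
Context {X : Type} (T : Topology X) (HX : open_countable_union_of_clopen T)
  (HQ : QN_space T).

(* The key use of QN: [phi n x = 1/(j+1)], with [j] the first index whose sequence
   moves at step [n], tends to [0] pointwise, so it has a quasi-normal rate [eps]; a
   sequence of index [i] moving at step [n] forces [1/(i+1) <= phi n x < eps n]. *)
Lemma QN_stabilization {Y : Type} (F : nat -> nat -> X -> Y) (f : nat -> X -> Y) :
  (forall i n, locally_constant T (F i n)) ->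
  (forall i x, eventually (fun n => F i n x = f i x)) ->
  exists t : nat -> nat, (forall i, (i <= t i)%nat) /\
    forall x, eventually (fun i => forall n, (t i <= n)%nat -> F i n x = f i x).
Proof.
  intros HF Hcv.
  set (moves := fun n x i => bool_of (F i n x <> F i (S n) x)).
  set (phi := fun n x => / INR (S (first_true (moves n x) (S n)))).
  assert (phi_continuous : forall n, continuous_real T (phi n)).
  { intros n; apply lc_continuous, (lc_comp T _ (fun j => / INR (S j))).
    apply (lc_first_true T (moves n)); intros i.
    apply (lc_comp T _ bool_of), (lc_op2 T _ _ (fun a b => a <> b)); auto. }
  assert (phi_cv : forall x, Un_cv (fun n => phi n x) 0).
  { intros x e He; destruct (inv_INR_S_small e He) as [K HK].
    assert (Hstill : eventually (fun n => forall i, (i < K)%nat -> moves n x i = false)).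
    { apply (eventually_mono (fun n => forall i, (i < K)%nat ->
                                F i n x = f i x /\ F i (S n) x = f i x)).
      { intros n Hn i Hi; destruct (Hn i Hi) as [E1 E2].
        apply bool_of_false; congruence. }
      apply eventually_forall_lt; intros i _.
      destruct (Hcv i x) as [N HN]; exists N; split; apply HN; lia. }
    destruct (eventually_and _ _ Hstill (eventually_ge K)) as [N HN].
    exists N; intros n Hn; destruct (HN n Hn) as [Hm HKn].
    unfold R_dist; rewrite Rminus_0_r, Rabs_pos_eq by (left; apply inv_INR_S_pos).
    eapply Rle_lt_trans; [|exact HK].
    apply inv_INR_S_le, first_true_ge; auto. }
  destruct (HQ phi phi_continuous phi_cv) as [eps [_ [eps_cv eps_dom]]].
  destruct (choice (fun i m => (i <= m)%nat /\
                     forall n, (m <= n)%nat -> eps n < / INR (S i))) as [t Ht].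
  { intros i; destruct (eps_cv _ (inv_INR_S_pos i)) as [N HN].
    exists (max N i); split; [lia|]; intros n Hn.
    specialize (HN n ltac:(lia)); unfold R_dist in HN; rewrite Rminus_0_r in HN.
    eapply Rle_lt_trans; [apply Rle_abs | exact HN]. }
  exists t; split; [intros i; apply Ht|].
  intros x; destruct (eps_dom x) as [N HN]; exists N; intros i Hi.
  destruct (Ht i) as [Hit Heps].
  apply (stable_eventually (fun n => F i n x) (t i) (f i x)); [|apply Hcv].
  intros n Hn; destruct (classic (F i (S n) x = F i n x)) as [|Hmove]; auto.
  exfalso.
  assert (Hphi : / INR (S i) <= phi n x).
  { apply inv_INR_S_le, first_true_le_witness; [|lia].
    apply bool_of_true; congruence. }
  specialize (HN n ltac:(lia)); specialize (Heps n Hn).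
  rewrite Rminus_0_r, Rabs_pos_eq in HN by (left; apply inv_INR_S_pos); lra.
Qed.


Lemma lc_limit_open (U : X -> Prop) : open T U -> lc_limit T U.
Proof.
  intros HU; destruct (HX U HU) as [C [HC HCU]].
  exists (fun n x => exists i, (i < n)%nat /\ C i x); split.
  - intros n; apply lc_exists_lt; intros i; now apply lc_clopen.
  - intros x; destruct (classic (U x)) as [Ux|nUx].
    + destruct (proj1 (HCU x) Ux) as [i Ci]; exists (S i); intros n Hn.
      apply propositional_extensionality; split; auto; intros _; exists i; split; auto.
    + exists O; intros n _; apply propositional_extensionality; split; [|tauto].
      intros [i [_ Ci]]; exfalso; apply nUx, HCU; eauto.
Qed.

(* The [n]-th approximation only uses the indices [i] with [t i <= n]; by
   stabilization, the other indices cannot spoil convergence. *)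
Lemma lc_limit_cunion (A : nat -> X -> Prop) :
  (forall i, lc_limit T (A i)) -> lc_limit T (fun x => exists i, A i x).
Proof.
  intros HA; destruct (choice (fun i D => (forall n, locally_constant T (D n)) /\
                         forall x, eventually (fun n => D n x = A i x)) HA)
    as [D HD].
  destruct (QN_stabilization (fun i => D i) A) as [t [Hit Ht]];
    [intros i; apply HD | intros i; apply HD|].
  exists (fun n x => exists i, (i < S n)%nat /\ (t i <= n)%nat /\ D i n x); split.
  - intros n; apply lc_exists_lt; intros i.
    apply (lc_comp T _ (fun P => (t i <= n)%nat /\ P)), HD.
  - intros x; destruct (classic (exists i, A i x)) as [[i Ai]|nA].
    + destruct (eventually_and _ _ (proj2 (HD i) x) (eventually_ge (t i))) as [N HN].
      exists N; intros n Hn; destruct (HN n Hn) as [E Htn].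
      apply propositional_extensionality; split; eauto; intros _.
      exists i; rewrite E; specialize (Hit i); repeat split; auto; lia.
    + destruct (Ht x) as [K HK].
      destruct (eventually_forall_lt (fun i n => D i n x = A i x) K)
        as [N HN]; [intros i _; apply HD|].
      exists N; intros n Hn; apply propositional_extensionality; split; [|tauto].
      intros [i [_ [Htn Di]]]; exfalso; apply nA; exists i.
      destruct (Nat.lt_ge_cases i K) as [HiK|HiK].
      * now rewrite <- (HN n Hn i HiK).
      * now rewrite <- (HK i HiK n Htn).
Qed.

Lemma Borel_lc_limit (A : X -> Prop) : Borel T A -> lc_limit T A.
Proof.
  intros HA; apply HA.
  - split; [intros B HB; exact (lc_limit_comp T B not HB) | exact lc_limit_cunion].
  - exact lc_limit_open.
Qed.

(* Approximate [Psi x k] by the first [m <= n] whose level set approximation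
   [D m n] contains [x]. *)
Lemma Borel_coordinate_lc_limit (Psi : X -> nat -> nat) k :
  Borel_function T Psi -> lc_limit T (fun x => Psi x k).
Proof.
  intros HPsi.
  assert (Hlevel : forall m, lc_limit T (fun x => Psi x k = m)).
  { intros m; apply Borel_lc_limit, (HPsi (fun f => f k = m)).
    intros f Hf; exists (S k); intros g Hg; rewrite Hg; auto. }
  destruct (choice _ Hlevel) as [D HD].
  exists (fun n x => first_true (fun m => bool_of (D m n x)) (S n)); split.
  - intros n; apply (lc_first_true T (fun x m => bool_of (D m n x))); intros m.
    apply lc_comp, HD.
  - intros x.
    destruct (eventually_and _ _ (eventually_ge (Psi x k))
                (eventually_forall_lt (fun m n => D m n x = (Psi x k = m)) (S (Psi x k))
                   (fun m _ => proj2 (HD m) x))) as [N HN].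
    exists N; intros n Hn; destruct (HN n Hn) as [Hkn HD'].
    apply Nat.le_antisymm.
    + apply first_true_le_witness; [|lia].
      apply bool_of_true; rewrite HD'; auto.
    + apply first_true_ge; [|lia]; intros i Hi.
      apply bool_of_false; rewrite HD' by lia; lia.
Qed.

(* Truncating the approximations at [n] makes the stabilization modulus a bound. *)
Lemma QN_Borel_image_bounded (Psi : X -> nat -> nat) :
  Borel_function T Psi -> bounded_baire (image_of Psi).
Proof.
  intros HPsi.
  destruct (choice _ (fun k => Borel_coordinate_lc_limit Psi k HPsi)) as [F HF].
  destruct (QN_stabilization (fun k n x => Nat.min (F k n x) n) (fun k x => Psi x k))
    as [t [_ Ht]].
  - intros k n; apply (lc_comp T (F k n) (fun m => Nat.min m n)), HF.
  - intros k x; destruct (eventually_and _ _ (proj2 (HF k) x) (eventually_ge (Psi x k)))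
      as [N HN].
    exists N; intros n Hn; destruct (HN n Hn) as [-> Hle]; lia.
  - exists t; intros f [x <-]; destruct (Ht x) as [N HN]; exists N; intros k Hk.
    rewrite <- (HN k Hk (t k)) by lia; lia.
Qed.

End Forward.

Fixpoint slow_index (g : nat -> nat) (n : nat) : nat :=
  match n with
  | O => O
  | S n' => if (g (S (slow_index g n')) <=? S n')%nat then S (slow_index g n')
            else slow_index g n'
  end.

Lemma slow_index_mono g n m : (n <= m)%nat -> (slow_index g n <= slow_index g m)%nat.
Proof.
  induction 1 as [|m _ IH]; auto; simpl.
  destruct (Nat.leb_spec (g (S (slow_index g m))) (S m)); lia.
Qed.

Lemma slow_index_unbounded g K : eventually (fun n => (K <= slow_index g n)%nat).
Proof.
  induction K as [|K [N HN]]; [exists O; intros; lia|].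
  set (n0 := max N (g (S K))).
  assert (Hn0 : (K <= slow_index g n0)%nat) by (apply HN; lia).
  assert (Hgn0 : (g (S K) <= n0)%nat) by lia.
  exists (S n0); intros n Hn.
  apply Nat.le_trans with (slow_index g (S n0)); [|now apply slow_index_mono].
  simpl; destruct (Nat.leb_spec (g (S (slow_index g n0))) (S n0)); [lia|].
  destruct (Nat.eq_dec (slow_index g n0) K) as [E|]; [rewrite E in *; lia | lia].
Qed.

Lemma slow_index_below g : eventually (fun n => (g (slow_index g n) <= n)%nat).
Proof.
  assert (Hinv : forall n, slow_index g n = O \/ (g (slow_index g n) <= n)%nat).
  { induction n as [|n IH]; simpl; auto.
    destruct (Nat.leb_spec (g (S (slow_index g n))) (S n)); auto.
    destruct IH as [->|]; [left|right]; auto. }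
  exists (g O); intros n Hn; destruct (Hinv n) as [E|]; auto; now rewrite E.
Qed.

Lemma least_witness (P : nat -> Prop) :
  (exists n, P n) -> exists n, P n /\ forall m, P m -> (n <= m)%nat.
Proof.
  intros Hex; destruct (dec_inh_nat_subset_has_unique_least_element P
                         (fun n => classic (P n)) Hex) as [n [Hn _]].
  now exists n.
Qed.

(* The rates are [1/(k+1)] with [k] growing so slowly that [g k <= n] at time [n]. *)
Lemma qn_converges_of_bounded_moduli {X : Type} (fn : nat -> X -> R)
  (Psi : X -> nat -> nat) :
  bounded_baire (image_of Psi) ->
  (forall x k n, (Psi x k <= n)%nat -> Rabs (fn n x) < / INR (S k)) ->
  qn_converges fn (fun _ => 0).
Proof.
  intros [g Hg] Hmod.
  exists (fun n => / INR (S (slow_index g n))); split; [|split].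
  - intros n; apply inv_INR_S_pos.
  - intros e He; destruct (inv_INR_S_small e He) as [K HK].
    destruct (slow_index_unbounded g K) as [N HN]; exists N; intros n Hn.
    unfold R_dist; rewrite Rminus_0_r, Rabs_pos_eq by (left; apply inv_INR_S_pos).
    eapply Rle_lt_trans; [apply inv_INR_S_le, HN, Hn | exact HK].
  - intros x; destruct (Hg (Psi x) (ex_intro _ x eq_refl)) as [K HK].
    destruct (eventually_and _ _ (slow_index_unbounded g K) (slow_index_below g))
      as [N HN].
    exists N; intros n Hn; destruct (HN n Hn) as [HKn Hgn].
    rewrite Rminus_0_r; apply Hmod.
    specialize (HK _ HKn); lia.
Qed.

Lemma Borel_image_bounded_QN {X : Type} (T : Topology X) :
  (forall Psi, Borel_function T Psi -> bounded_baire (image_of Psi)) -> QN_space T.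
Proof.
  intros Hbounded fn Hcont Hcv.
  set (tail_small := fun x k N => forall n, (N <= n)%nat -> Rabs (fn n x) < / INR (S k)).
  assert (tail_Borel : forall k N, Borel T (fun x => tail_small x k N)).
  { intros k N; apply Borel_cinter; intros n; apply Borel_impl; [apply Borel_const|].
    apply Borel_open, (Hcont n (fun y => Rabs y < / INR (S k))), open_abs_lt.
    apply inv_INR_S_pos. }
  destruct (choice (fun x (h : nat -> nat) => forall k,
                      tail_small x k (h k) /\ forall m, tail_small x k m -> (h k <= m)%nat))
    as [Psi HPsi].
  { intros x; apply (choice (fun k N => tail_small x k N /\
                                 forall m, tail_small x k m -> (N <= m)%nat)).
    intros k; apply least_witness.
    destruct (Hcv x _ (inv_INR_S_pos k)) as [N HN]; exists N; intros n Hn.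
    specialize (HN n Hn); unfold R_dist in HN; now rewrite Rminus_0_r in HN. }
  assert (Psi_levels : forall k a, Borel T (fun x => Psi x k = a)).
  { intros k a.
    replace (fun x => Psi x k = a)
      with (fun x => tail_small x k a /\ forall m, (m < a)%nat -> ~ tail_small x k m).
    - apply Borel_and; auto; apply Borel_cinter; intros m.
      apply Borel_impl; [apply Borel_const | now apply Borel_compl].
    - apply set_ext; intros x; destruct (HPsi x k) as [Hsmall Hleast]; split.
      + intros [Ha Hbelow]; apply Nat.le_antisymm; auto.
        apply Nat.nlt_ge; intros Hlt; exact (Hbelow _ Hlt Hsmall).
      + intros <-; split; auto; intros m Hm Hsm; specialize (Hleast m Hsm); lia. }
  apply (qn_converges_of_bounded_moduli fn Psi).
  - exact (Hbounded Psi (Borel_function_of_levels T Psi Psi_levels)).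
  - intros x k n Hn; exact (proj1 (HPsi x k) n Hn).
Qed.

Theorem mainTheorem7 (X : Type) (T : Topology X)
  (HX : open_countable_union_of_clopen T) :
  QN_space T <->
  (forall Psi : X -> (nat -> nat), Borel_function T Psi -> bounded_baire (image_of Psi)).
Proof.
  split.
  - intros HQ Psi; exact (QN_Borel_image_bounded T HX HQ Psi).
  - apply Borel_image_bounded_QN.
Qed.
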